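(* Let $\alpha>0$ and let $P$ be a probability measure on $\mathbb{S}^{d-1}\times\mathbb{R}^d$ belonging to $\mathcal{M}_\alpha$, and let $P^*$ be its adjoint measure. Then: (i) $P^*$ is a probability measure and the marginal distributions induced by $P$ and $P^*$ on $\mathbb{S}^{d-1}$ coincide; (ii) for every measurable $f:\mathbb{S}^{d-1}\times(\mathbb{R}^d\setminus\{0\})\to\mathbb{R}$, $$\int_{\mathbb{S}^{d-1}\times(\mathbb{R}^d\setminus\{0\})}f(s^*,m^* )\,P^*(ds^*,dm^* )=\int_{\mathbb{S}^{d-1}\times(\mathbb{R}^d\setminus\{0\})}f(m/\|m\|,s/\|m\|)\,\|m\|^\alpha\,P(ds,dm),$$ in the sense that if one integral exists then so does the other and they are equal; (iii) $P^*\in\mathcal{M}_\alpha$; (iv) $(P^* )^*=P$.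
   Context: $\|\cdot\|$ is the Euclidean norm and $\mathbb{S}^{d-1}$ the unit sphere in $\mathbb{R}^d$. $\mathcal{M}_\alpha$ is the set of probability measures $P$ on $\mathbb{S}^{d-1}\times\mathbb{R}^d$ such that $\int_{\mathbb{S}^{d-1}\times(\mathbb{R}^d\setminus\{0\})}\mathbf{1}_S(m/\|m\|)\|m\|^\alpha P(ds,dm)\le P(S\times\mathbb{R}^d)$ for every Borel $S\subset\mathbb{S}^{d-1}$. For $P\in\mathcal{M}_\alpha$, the adjoint $P^*$ is the (a priori signed) Borel measure on $\mathbb{S}^{d-1}\times\mathbb{R}^d$ defined by $P^*(S\times\{0\})=P(S\times\mathbb{R}^d)-\int_{\mathbb{S}^{d-1}\times(\mathbb{R}^d\setminus\{0\})}\mathbf{1}_S(m/\|m\|)\|m\|^\alpha P(ds,dm)$ for Borel $S\subset\mathbb{S}^{d-1}$, and $P^*(E)=\int_{\mathbb{S}^{d-1}\times(\mathbb{R}^d\setminus\{0\})}\mathbf{1}_E(m/\|m\|,s/\|m\|)\|m\|^\alpha P(ds,dm)$ for Borel $E\subset\mathbb{S}^{d-1}\times(\mathbb{R}^d\setminus\{0\})$. *)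

From HB Require Import structures.
From mathcomp Require Import all_boot all_order all_algebra.
From mathcomp Require Import all_classical all_reals all_analysis.
Unset Printing Implicit Defensive.
Import Order.TTheory GRing.Theory Num.Theory.
Import numFieldNormedType.Exports.
Local Open Scope classical_set_scope.
Local Open Scope ring_scope.

(* R^d, carried by row vectors 'rV[R]_d, equipped with its Borel
   sigma-algebra (generated by the open sets of the usual topology). *)
Definition Rd (R : realType) (d : nat) : Type :=
  g_sigma_algebraType (@open 'rV[R]_d).

(* the ambient space R^d x R^d with the product sigma-algebra;
   the paper's space S^{d-1} x R^d is the measurable subset [sphere `*` setT] *)
Definition Rd2 (R : realType) (d : nat) : Type := (Rd R d * Rd R d)%type.

Definition enorm (R : realType) (d : nat) (v : 'rV[R]_d) : R :=
  Num.sqrt (\sum_(i < d) (v ord0 i) ^+ 2).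
Arguments enorm {R d}.

Definition sphere (R : realType) (d : nat) : set (Rd R d) :=
  [set v | enorm (v : 'rV[R]_d) = 1].

Definition nonzero (R : realType) (d : nat) : set (Rd R d) :=
  [set v | (v : 'rV[R]_d) != 0].

Definition Dom (R : realType) (d : nat) : set (Rd2 R d) :=
  sphere R d `*` nonzero R d.

Definition swapmap (R : realType) (d : nat) (x : Rd2 R d) : Rd2 R d :=
  (((enorm (x.2 : 'rV[R]_d))^-1 *: (x.2 : 'rV[R]_d) : Rd R d),
   ((enorm (x.2 : 'rV[R]_d))^-1 *: (x.1 : 'rV[R]_d) : Rd R d)).
Arguments swapmap {R d}.

Definition weight (R : realType) (d : nat) (alpha : R) (x : Rd2 R d) : R :=
  (enorm (x.2 : 'rV[R]_d)) `^ alpha.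
Arguments weight {R d}.

(* membership in M_alpha (P is a probability measure on S^{d-1} x R^d,
   i.e. a probability on R^d x R^d giving full mass to S^{d-1} x R^d) *)
Definition in_M (R : realType) (d : nat) (alpha : R)
    (P : probability (Rd2 R d) R) : Prop :=
  P (~` (sphere R d `*` setT)) = 0%E /\
  forall S : set (Rd R d), measurable S -> S `<=` sphere R d ->
    (\int[P]_(x in Dom R d)
        ((\1_S ((swapmap x).1) : R) * weight alpha x)%:E
      <= P (S `*` setT))%E.

(* the adjoint set function P^*: a Borel set A of S^{d-1} x R^d is split into
   A \cap (S^{d-1} x {0}) = S_A x {0} and A \cap (S^{d-1} x (R^d\{0})) *)
Definition adjoint (R : realType) (d : nat) (alpha : R)
    (P : probability (Rd2 R d) R) (A : set (Rd2 R d)) : \bar R :=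
  let SA := [set s | sphere R d s /\ A (s, (0 : 'rV[R]_d) : Rd R d)] in
  (P (SA `*` setT)
   - \int[P]_(x in Dom R d) ((\1_SA ((swapmap x).1) : R) * weight alpha x)%:E
   + \int[P]_(x in Dom R d)
        ((\1_(A `&` Dom R d) (swapmap x) : R) * weight alpha x)%:E)%E.

Definition integral_exists (dT : measure_display) (T : measurableType dT)
    (R : realType) (mu : {measure set T -> \bar R}) (D : set T) (f : T -> R) :=
  ((\int[mu]_(x in D) (EFin \o f)^\+ x < +oo) \/
   (\int[mu]_(x in D) (EFin \o f)^\- x < +oo))%E.
Arguments in_M {R d}.
Arguments adjoint {R d}.
Arguments integral_exists {dT T R}.

From HB Require Import structures.
From mathcomp Require Import all_boot all_order all_algebra.
From mathcomp Require Import all_classical all_reals all_analysis.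
From mathcomp Require Import lra measurable_realfun.
Import Order.TTheory GRing.Theory Num.Theory.
Import numFieldNormedType.Exports.
Local Open Scope classical_set_scope.
Local Open Scope ring_scope.

(* P^* is the sum of two measures.  On S^{d-1} x (R^d \ {0}) it is the image,
   under the involution sw (s, m) = (m/||m||, s/||m||), of the measure with
   density ||m||^alpha against P restricted to that set; on S^{d-1} x {0} it is
   the marginal of P on the sphere minus the marginal of that image, a
   nonnegative measure precisely because P is in M_alpha.  The weight at sw x is
   the inverse of the weight at x, so integrating against P^* undoes the
   change of variables: this gives (ii) for the positive and negative parts,
   and (i), (iii), (iv) are direct computations with it. *)

Section borel_rV.
Context (R : realType) (d : nat).

Lemma measurable_coord (i : 'I_d) :
  measurable_fun [set: Rd R d] (fun v : Rd R d => (v : 'rV[R]_d) ord0 i).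
Proof.
apply: (measurability _ (RGenOpens.measurableE R)).
move=> _ [_ [a [b ->]] <-]; rewrite setTI.
apply: sub_sigma_algebra.
have /continuousP := @coord_continuous R 1 d ord0 i; apply.
exact: interval_open.
Qed.

Definition rat_box (p : 'rV[rat]_d * 'rV[rat]_d) : set 'rV[R]_d :=
  [set v | forall i, ratr (p.1 ord0 i) < v ord0 i < ratr (p.2 ord0 i)].

Lemma rat_box_cover {U : set 'rV[R]_d} {v : 'rV[R]_d} : open U -> U v ->
  exists p, rat_box p v /\ rat_box p `<=` U.
Proof.
move=> oU Uv; have /nbhs_ballP[e e0 eU] : nbhs v U by exact: open_nbhs_nbhs.
have : forall i : 'I_d, exists q : rat * rat,
    v ord0 i - e < ratr q.1 < v ord0 i /\ v ord0 i < ratr q.2 < v ord0 i + e.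
  move=> i.
  have [q1 q1i] : exists q, ratr q \in `](v ord0 i - e), (v ord0 i)[.
    by apply: rat_in_itvoo; rewrite ltrBlDr ltrDl.
  have [q2 q2i] : exists q, ratr q \in `](v ord0 i), (v ord0 i + e)[.
    by apply: rat_in_itvoo; rewrite ltrDl.
  by exists (q1, q2); move: q1i q2i; rewrite !in_itv /= => -> ->.
move=> /fin_all_exists[q qP].
exists (\row_i (q i).1, \row_i (q i).2); split.
  by move=> i /=; rewrite !mxE; have [/andP[_ ->] /andP[-> _]] := qP i.
move=> u ub; apply: eU; split => // i j; rewrite (ord1 i).
have [/andP[h1 h2] /andP[h3 h4]] := qP j.
have /andP[h5 h6] := ub j; rewrite /= !mxE in h5 h6.
rewrite /ball /= ltr_norml; apply/andP; split; lra.
Qed.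

(* Open sets of R^d are countable unions of rational boxes, so measurability
   into R^d reduces to measurability of the coordinates. *)
Lemma measurable_fun_rV dT (T : measurableType dT) (f : T -> Rd R d) :
  (forall i, measurable_fun [set: T] (fun x => (f x : 'rV[R]_d) ord0 i)) ->
  measurable_fun [set: T] f.
Proof.
move=> mf; apply: (@measurability _ _ T (Rd R d) setT f (@open 'rV[R]_d) erefl).
move=> _ [U oU <-]; rewrite setTI.
have -> : f @^-1` U =
    \bigcup_p (f @^-1` rat_box p `&` [set _ | rat_box p `<=` U]).
  apply/seteqP; split => [x Ux|x [p _ [bx bU]]]; last exact: bU.
  by have [p [bp pU]] := rat_box_cover oU Ux; exists p.
apply: countable_bigcupT_measurable; first exact: countableP.
move=> p; have [pU|pU] := pselect (rat_box p `<=` U); last first.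
  by rewrite [X in _ `&` X](_ : _ = set0) ?setI0//; apply/seteqP; split.
rewrite [X in _ `&` X](_ : _ = setT) ?setIT; last by apply/seteqP; split.
have -> : f @^-1` rat_box p = \bigcap_(i in [set: 'I_d])
    ((fun x => (f x : 'rV[R]_d) ord0 i) @^-1`
       `](ratr (p.1 ord0 i) : R), ratr (p.2 ord0 i)[).
  apply/seteqP; split => [x bx i _|x bx i]; first by rewrite /= in_itv /=.
  by have := bx i Logic.I; rewrite /= in_itv.
apply: fin_bigcap_measurable => // i _.
by rewrite -[X in measurable X]setTI; exact: mf.
Qed.

Lemma measurable_fun_scale_rV dT (T : measurableType dT)
    (c : T -> R) (v : T -> Rd R d) :
  measurable_fun [set: T] c -> measurable_fun [set: T] v ->
  measurable_fun [set: T] (fun x => (c x *: (v x : 'rV[R]_d) : Rd R d)).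
Proof.
move=> mc mv; apply: measurable_fun_rV => i.
under eq_fun do rewrite mxE.
exact: measurable_funM mc (measurableT_comp (measurable_coord i) mv).
Qed.

End borel_rV.

Section enorm.
Context (R : realType) (d : nat).
Implicit Types v : 'rV[R]_d.

Lemma enorm_ge0 v : 0 <= enorm v.
Proof. exact: sqrtr_ge0. Qed.

Lemma enormZ (c : R) v : enorm (c *: v) = `|c| * enorm v.
Proof.
rewrite /enorm (eq_bigr (fun i => c ^+ 2 * v ord0 i ^+ 2)); last first.
  by move=> i _; rewrite mxE exprMn.
by rewrite -mulr_sumr sqrtrM ?sqr_ge0// sqrtr_sqr.
Qed.

Lemma enorm_eq0 v : (enorm v == 0) = (v == 0).
Proof.
apply/idP/idP => [|/eqP ->]; last first.
  by rewrite /enorm big1 ?sqrtr0// => i _; rewrite mxE expr0n.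
rewrite sqrtr_eq0 => v0; apply/eqP/rowP => i; rewrite mxE.
have /eqP : \sum_(j < d) v ord0 j ^+ 2 = 0.
  by apply/eqP; rewrite eq_le v0 sumr_ge0// => j _; rewrite sqr_ge0.
rewrite psumr_eq0 => [/allP/(_ i)|j _]; last by rewrite sqr_ge0.
by rewrite mem_index_enum /= sqrf_eq0 => /(_ isT)/eqP.
Qed.

End enorm.

Section borel_Dom.
Context (R : realType) (d : nat).

Lemma measurable_enorm :
  measurable_fun [set: Rd R d] (fun v : Rd R d => enorm (v : 'rV[R]_d)).
Proof.
apply: (measurableT_comp (continuous_measurable_fun (@sqrt_continuous R))).
by apply: measurable_sum => i; apply: measurable_funX; exact: measurable_coord.
Qed.

Lemma measurable_sphere : measurable (sphere R d).
Proof.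
have -> : sphere R d = (fun v : Rd R d => enorm (v : 'rV[R]_d)) @^-1` [set 1] by [].
by rewrite -[X in measurable X]setTI; exact: measurable_enorm.
Qed.

Lemma measurable_nonzero : measurable (nonzero R d).
Proof.
have -> : nonzero R d = (fun v : Rd R d => enorm (v : 'rV[R]_d)) @^-1` ~` [set 0].
  by apply/seteqP; split => v /=; rewrite /nonzero /= -enorm_eq0 => /eqP.
by rewrite -[X in measurable X]setTI; apply: measurable_enorm => //; exact: measurableC.
Qed.

Lemma measurable_Dom : measurable (Dom R d).
Proof. exact: measurableX measurable_sphere measurable_nonzero. Qed.

Lemma measurable_swapmap : measurable_fun [set: Rd2 R d] (@swapmap R d).
Proof.
have minv : measurable_fun [set: Rd2 R d]
    (fun x : Rd2 R d => (enorm (x.2 : 'rV[R]_d))^-1).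
  under eq_fun do rewrite -powR_inv1 ?enorm_ge0//.
  exact: measurableT_comp (measurable_powR _)
                          (measurableT_comp measurable_enorm measurable_snd).
by apply/measurable_fun_pairP; split;
  apply: measurable_fun_scale_rV minv _; [exact: measurable_snd|exact: measurable_fst].
Qed.

Lemma measurable_weight (alpha : R) :
  measurable_fun [set: Rd2 R d] (weight alpha).
Proof.
exact: measurableT_comp (measurable_powR _)
                        (measurableT_comp measurable_enorm measurable_snd).
Qed.

End borel_Dom.

Definition mdensity dT (T : measurableType dT) (R : realType)
    (mu : set T -> \bar R) (h : T -> R) (A : set T) : \bar R :=
  (\int[mu]_(x in A) (h x)%:E)%E.
Arguments mdensity {dT T R}.

Section density.
Local Open Scope ereal_scope.
Context dT (T : measurableType dT) (R : realType) (mu : {measure set T -> \bar R}).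
Variable h : T -> R.
Hypotheses (mh : measurable_fun [set: T] h) (h_ge0 : forall x, (0 <= h x)%R).

Let mdensity0 : mdensity mu h set0 = 0.
Proof. exact: integral_set0. Qed.

Let mdensity_ge0 A : 0 <= mdensity mu h A.
Proof. by apply: integral_ge0 => x _; rewrite lee_fin. Qed.

Let mdensity_sigma_additive : semi_sigma_additive (mdensity mu h).
Proof.
apply: semi_sigma_additive_nng_induced => //.
exact/measurable_EFinP.
Qed.

HB.instance Definition _ := isMeasure.Build _ _ _ (mdensity mu h)
  mdensity0 mdensity_ge0 mdensity_sigma_additive.

Definition density_measure : {measure set T -> \bar R} := mdensity mu h.

Lemma density_measureE A : measurable A ->
  density_measure A = \int[mu]_x (\1_A x * h x)%:E.
Proof.
move=> mA; rewrite -[LHS]/(\int[mu]_(x in A) (h x)%:E) integral_mkcond.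
apply: eq_integral => x _.
by rewrite /patch indicE; case: ifPn => xA; rewrite ?mul1r ?mul0r.
Qed.

Import HBNNSimple.

Lemma integral_density_measure_nnsfun (f : {nnsfun T >-> R}) :
  \int[density_measure]_x (f x)%:E = \int[mu]_x ((f x)%:E * (h x)%:E).
Proof.
under [LHS]eq_integral do rewrite fimfunE -fsumEFin//.
rewrite ge0_integral_fsum//; last 2 first.
- by move=> r; exact/measurable_EFinP/measurable_funM.
- by move=> r x _; rewrite nnfun_muleindic_ge0.
under [RHS]eq_integral do rewrite -EFinM fimfunE mulr_fsuml -fsumEFin//.
rewrite ge0_integral_fsum//; last 2 first.
- by move=> r; exact/measurable_EFinP/measurable_funM/mh/measurable_funM.
- move=> r x _; rewrite lee_fin mulr_ge0//.
  by have := nnfun_muleindic_ge0 f r x; rewrite -EFinM lee_fin.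
apply: eq_fsbigr => r /set_mem [t _ <-].
rewrite integralZl_indic_nnsfun// integral_indic//= setIT.
under eq_integral do rewrite -mulrA EFinM.
rewrite ge0_integralZl_EFin//.
- by rewrite density_measureE//; exact: measurable_funPTI.
- by move=> x _; rewrite lee_fin mulr_ge0.
- exact/measurable_EFinP/measurable_funM.
Qed.

Lemma ge0_integral_density_measure (f : T -> \bar R) :
  measurable_fun [set: T] f -> (forall x, 0 <= f x) ->
  \int[density_measure]_x f x = \int[mu]_x (f x * (h x)%:E).
Proof.
move=> mf f0; pose f_ := nnsfun_approx measurableT mf.
have f_nd x : {homo (fun n => (f_ n x)%:E) : m n / (m <= n)%N >-> m <= n}.
  by move=> m n mn; rewrite lee_fin; exact/lefP/nd_nnsfun_approx.
transitivity (limn (fun n => \int[density_measure]_x (f_ n x)%:E)).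
  rewrite -monotone_convergence//=.
  - apply: eq_integral => x _; apply/esym/cvg_lim => //=.
    exact: cvg_nnsfun_approx.
  - by move=> n; exact/measurable_EFinP.
  - by move=> n x _; rewrite lee_fin.
transitivity (limn (fun n => \int[mu]_x ((f_ n x)%:E * (h x)%:E))).
  by congr (limn _); apply/funext => n; exact: integral_density_measure_nnsfun.
rewrite -monotone_convergence//=.
- apply: eq_integral => x _; apply/cvg_lim => //=.
  by apply: cvgeZr => //; exact: cvg_nnsfun_approx.
- by move=> n; exact/measurable_EFinP/measurable_funM.
- by move=> n x _; rewrite mule_ge0// lee_fin.
- by move=> x _ a b ab; rewrite lee_wpmul2r ?lee_fin//; exact: f_nd.
Qed.

End density.
Arguments density_measure {dT T R} mu {h}.

(* The truncation at [0] only serves to make [mdiff] nonnegative on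
   non-measurable sets; on measurable sets it is the plain difference. *)
Definition mdiff dT (T : measurableType dT) (R : realType)
    (m1 m2 : set T -> \bar R) (A : set T) : \bar R :=
  maxe (m1 A - m2 A)%E 0%E.
Arguments mdiff {dT T R}.

Section mdiff.
Local Open Scope ereal_scope.
Context dT (T : measurableType dT) (R : realType).
Variables m1 m2 : {measure set T -> \bar R}.
Hypotheses (m2_le_m1 : forall A, measurable A -> m2 A <= m1 A)
           (m1_finite : m1 setT < +oo).

Let m2_fin_num A : measurable A -> m2 A \is a fin_num.
Proof.
move=> mA; rewrite ge0_fin_numE//; apply: (le_lt_trans (m2_le_m1 _ mA)).
by apply: le_lt_trans m1_finite; apply: le_measure; rewrite ?inE.
Qed.

Let mdiffE A : measurable A -> mdiff m1 m2 A = m1 A - m2 A.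
Proof. by move=> mA; apply: max_l; rewrite sube_ge0 ?m2_le_m1// m2_fin_num. Qed.

Let mdiff0 : mdiff m1 m2 set0 = 0.
Proof. by rewrite mdiffE// !measure0 sube0. Qed.

Let mdiff_ge0 A : 0 <= mdiff m1 m2 A.
Proof. by rewrite /mdiff le_max lexx orbT. Qed.

Let mdiff_sigma_additive : semi_sigma_additive (mdiff m1 m2).
Proof.
move=> F mF tF mUF; rewrite mdiffE//.
have -> : (fun n => \sum_(0 <= i < n) mdiff m1 m2 (F i)) =
    (fun n => \sum_(0 <= i < n) m1 (F i)) \- (fun n => \sum_(0 <= i < n) m2 (F i)).
  apply/funext => n /=; rewrite -fin_num_sumeN => [|i _]; last exact: m2_fin_num.
  by rewrite -big_split /=; apply: eq_bigr => i _; rewrite mdiffE.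
apply: cvgeB; last 2 first.
- exact: measure_semi_sigma_additive.
- exact: measure_semi_sigma_additive.
by rewrite fin_num_adde_defl// fin_numN m2_fin_num.
Qed.

HB.instance Definition _ := isMeasure.Build _ _ _ (mdiff m1 m2)
  mdiff0 mdiff_ge0 mdiff_sigma_additive.

Definition diff_measure : {measure set T -> \bar R} := mdiff m1 m2.

Lemma diff_measureE A : measurable A -> diff_measure A = m1 A - m2 A.
Proof. exact: mdiffE. Qed.

End mdiff.
Arguments diff_measure {dT T R m1 m2}.

(* The library's measure instance on [pushforward m f] depends on a proof of
   measurability of [f], which canonical structure inference cannot supply. *)
Definition pushforward_measure dT dT' (T : measurableType dT)
    (T' : measurableType dT') (R : realType) (m : {measure set T -> \bar R})
    (f : T -> T') (mf : measurable_fun [set: T] f) : {measure set T' -> \bar R}.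
Proof. by refine (pushforward m f). Defined.
Arguments pushforward_measure {dT dT' T T' R} m {f}.

Section swapmap.
Context {R : realType} {d : nat}.
Local Notation D := (Dom R d).
Local Notation sw := (@swapmap R d).
Implicit Types x : Rd2 R d.

Lemma enorm_snd_neq0 {x} : D x -> enorm (x.2 : 'rV[R]_d) != 0.
Proof. by move=> [_ x2]; rewrite enorm_eq0. Qed.

Lemma enorm_swapmap_fst {x} : D x -> enorm ((sw x).1 : 'rV[R]_d) = 1.
Proof.
move=> Dx.
by rewrite enormZ ger0_norm ?invr_ge0 ?enorm_ge0// mulVf// enorm_snd_neq0.
Qed.

Lemma enorm_swapmap_snd {x} : D x ->
  enorm ((sw x).2 : 'rV[R]_d) = (enorm (x.2 : 'rV[R]_d))^-1.
Proof.
by case=> x1 _; rewrite enormZ ger0_norm ?invr_ge0 ?enorm_ge0// x1 mulr1.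
Qed.

Lemma swapmap_Dom {x} : D x -> D (sw x).
Proof.
move=> Dx; split; first exact: enorm_swapmap_fst.
rewrite /nonzero /= -enorm_eq0 -/((sw x).2) enorm_swapmap_snd// invr_eq0.
exact: enorm_snd_neq0.
Qed.

Lemma swapmapK {x} : D x -> sw (sw x) = x.
Proof.
move=> Dx; rewrite {1}/swapmap -/((sw x).2) enorm_swapmap_snd// invrK.
have := enorm_snd_neq0 Dx.
by case: x Dx => s m _ /= m_neq0; rewrite /swapmap /= !scalerA mulfV// !scale1r.
Qed.

Lemma weight_ge0 alpha x : 0 <= weight alpha x.
Proof. exact: powR_ge0. Qed.

Lemma weight_swapmapM alpha {x} : D x -> weight alpha (sw x) * weight alpha x = 1.
Proof.
move=> Dx; have x2_neq0 := enorm_snd_neq0 Dx.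
by rewrite /weight enorm_swapmap_snd// -powRM ?invr_ge0 ?enorm_ge0// mulVf// powR1.
Qed.

End swapmap.

Section sphere_slice.
Context {R : realType} {d : nat}.
Local Notation T := (Rd2 R d).
Local Notation D := (Dom R d).
Local Notation sw := (@swapmap R d).
Local Notation zero := ((0 : 'rV[R]_d) : Rd R d).

Definition sphere_slice (A : set T) : set (Rd R d) :=
  [set s | sphere R d s /\ A (s, zero)].

Lemma measurable_sphere_slice {A} : measurable A -> measurable (sphere_slice A).
Proof.
move=> mA; have -> : sphere_slice A = sphere R d `&` (fun s => (s, zero)) @^-1` A by [].
apply: measurableI; first exact: measurable_sphere.
rewrite -[X in measurable X]setTI.
by apply: (@measurable_fun_pair _ _ _ _ _ _ id (fun=> zero)).
Qed.

Lemma sphere_sliceX S : S `<=` sphere R d -> sphere_slice (S `*` setT) = S.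
Proof.
by move=> Ssph; apply/seteqP; split => [s [_ []]//|s Ss]; split => //; exact: Ssph.
Qed.

Lemma adjointE alpha (mu : probability T R) A : adjoint alpha mu A =
  (mu (sphere_slice A `*` setT)
   - \int[mu]_(x in D) ((\1_(sphere_slice A) ((sw x).1) : R) * weight alpha x)%:E
   + \int[mu]_(x in D) ((\1_(A `&` D) (sw x) : R) * weight alpha x)%:E)%E.
Proof. by []. Qed.

End sphere_slice.

Section adjoint_measure.
Context (R : realType) (d : nat) (alpha : R) (P : probability (Rd2 R d) R).
Hypothesis P_in_M : in_M alpha P.
Local Notation T := (Rd2 R d).
Local Notation D := (Dom R d).
Local Notation X := (sphere R d `*` [set: Rd R d]).
Local Notation sw := (@swapmap R d).
Local Notation w := (weight alpha).
Local Notation zero := ((0 : 'rV[R]_d) : Rd R d).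

Let mD : measurable D := @measurable_Dom R d.

Let mX : measurable X.
Proof. exact: measurableX (@measurable_sphere R d) measurableT. Qed.

Let measurable_weightD : measurable_fun [set: T] (fun x => \1_D x * w x).
Proof. exact: measurable_funM (measurable_indic mD) (measurable_weight _ _ _). Qed.

Let weightD_ge0 x : 0 <= \1_D x * w x.
Proof. by rewrite mulr_ge0 ?weight_ge0. Qed.

Definition weighted_P := density_measure P measurable_weightD weightD_ge0.

Lemma weighted_PE A : measurable A ->
  weighted_P A = (\int[P]_(x in D) (\1_A x * w x)%:E)%E.
Proof.
move=> mA; rewrite density_measureE// [RHS]integral_mkcond.
apply: eq_integral => x _; rewrite /patch !indicE.
by case: (x \in D); rewrite ?mul1r ?mul0r ?mulr0.
Qed.

Definition adjoint_nonzero := pushforward_measure weighted_P (@measurable_swapmap R d).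

Lemma adjoint_nonzeroE A : measurable A ->
  adjoint_nonzero A = (\int[P]_(x in D) ((\1_(A `&` D) (sw x) : R) * w x)%:E)%E.
Proof.
move=> mA; rewrite -[LHS]/(weighted_P (sw @^-1` A)) weighted_PE; last first.
  by rewrite -[X in measurable X]setTI; exact: measurable_swapmap.
apply: eq_integral => x /[!inE] Dx; rewrite !indicE in_setI.
by rewrite [sw x \in D]mem_set ?andbT//; exact: swapmap_Dom.
Qed.

Definition zero_fst (x : T) : T := (x.1, zero).

Let measurable_zero_fst : measurable_fun [set: T] zero_fst.
Proof. exact: measurable_fun_pair measurable_fst (measurable_cst _). Qed.

Let measurable_zero_fst_swapmap : measurable_fun [set: T] (zero_fst \o sw).
Proof. exact: measurableT_comp measurable_zero_fst (@measurable_swapmap R d). Qed.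

Definition marginal_at_zero := pushforward_measure (mrestr P mX) measurable_zero_fst.

Lemma marginal_at_zeroE A : marginal_at_zero A = P (sphere_slice A `*` setT).
Proof.
congr (P _); apply/seteqP; split => -[s m] /=.
  by move=> [? [? _]].
by move=> [[? ?] _].
Qed.

Definition swapped_marginal_at_zero :=
  pushforward_measure weighted_P measurable_zero_fst_swapmap.

Lemma swapped_marginal_at_zeroE A : measurable A ->
  swapped_marginal_at_zero A =
  (\int[P]_(x in D) ((\1_(sphere_slice A) ((sw x).1) : R) * w x)%:E)%E.
Proof.
move=> mA; rewrite -[LHS]/(weighted_P ((zero_fst \o sw) @^-1` A)) weighted_PE.
  apply: eq_integral => x /[!inE] Dx; rewrite !indicE.
  suff -> : (x \in (zero_fst \o sw) @^-1` A) = ((sw x).1 \in sphere_slice A) by [].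
  apply/idP/idP => /set_mem h; apply/mem_set; last by case: h.
  by split => //; case: (swapmap_Dom Dx).
by rewrite -[X in measurable X]setTI; exact: measurable_zero_fst_swapmap.
Qed.

Lemma swapped_marginal_at_zero_le A : measurable A ->
  (swapped_marginal_at_zero A <= marginal_at_zero A)%E.
Proof.
move=> mA; rewrite swapped_marginal_at_zeroE// marginal_at_zeroE.
by apply: P_in_M.2; [exact: measurable_sphere_slice|move=> s []].
Qed.

Lemma marginal_at_zero_le1 A : measurable A -> (marginal_at_zero A <= 1)%E.
Proof.
move=> mA; rewrite marginal_at_zeroE; apply: probability_le1.
by apply: measurableX => //; exact: measurable_sphere_slice.
Qed.

Lemma marginal_at_zero_finite : (marginal_at_zero setT < +oo)%E.
Proof.
by apply: (@le_lt_trans _ _ 1%E); [exact: marginal_at_zero_le1|exact: ltry].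
Qed.

Definition adjoint_zero := diff_measure swapped_marginal_at_zero_le marginal_at_zero_finite.

Definition adjoint_measure := measure_add adjoint_zero adjoint_nonzero.
HB.instance Definition _ := Measure.copy adjoint_measure
  (measure_add adjoint_zero adjoint_nonzero).

Lemma adjoint_measureE A : measurable A -> adjoint_measure A = adjoint alpha P A.
Proof.
move=> mA; rewrite adjointE /adjoint_measure measure_addE diff_measureE//.
by rewrite marginal_at_zeroE swapped_marginal_at_zeroE// adjoint_nonzeroE.
Qed.

Let swapped_marginal_at_zero_fin_num A : measurable A ->
  swapped_marginal_at_zero A \is a fin_num.
Proof.
move=> mA; rewrite ge0_fin_numE//.
apply: (le_lt_trans (swapped_marginal_at_zero_le _ mA)).
by apply: (@le_lt_trans _ _ 1%E); [exact: marginal_at_zero_le1|exact: ltry].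
Qed.

Lemma adjoint_zero_eq0 A : measurable A -> sphere_slice A = set0 ->
  adjoint_zero A = 0%E.
Proof.
move=> mA A0; rewrite diff_measureE// marginal_at_zeroE swapped_marginal_at_zeroE//.
rewrite A0 set0X measure0; under eq_integral do rewrite indic0 mul0r.
by rewrite integral0 sube0.
Qed.

Lemma adjoint_nonzero_sphereX S : measurable S -> S `<=` sphere R d ->
  adjoint_nonzero (S `*` setT) = swapped_marginal_at_zero (S `*` setT).
Proof.
move=> mS Ssph; have mST : measurable (S `*` [set: Rd R d]) by exact: measurableX.
rewrite adjoint_nonzeroE// swapped_marginal_at_zeroE// sphere_sliceX//.
apply: eq_integral => x /[!inE] Dx; rewrite !indicE in_setI.
rewrite [sw x \in D]mem_set ?andbT; last exact: swapmap_Dom.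
suff -> : (sw x \in S `*` setT) = ((sw x).1 \in S) by [].
by apply/idP/idP => /set_mem h; apply/mem_set => //; case: h.
Qed.

Lemma adjoint_measure_sphereX S : measurable S -> S `<=` sphere R d ->
  adjoint_measure (S `*` setT) = P (S `*` setT).
Proof.
move=> mS Ssph; have mST : measurable (S `*` [set: Rd R d]) by exact: measurableX.
rewrite /adjoint_measure measure_addE diff_measureE// adjoint_nonzero_sphereX//.
by rewrite subeK ?swapped_marginal_at_zero_fin_num// marginal_at_zeroE sphere_sliceX.
Qed.

Lemma adjoint_measure_compl : adjoint_measure (~` X) = 0%E.
Proof.
have mXC : measurable (~` X) by exact: measurableC.
rewrite /adjoint_measure measure_addE adjoint_zero_eq0//; last first.
  by apply/seteqP; split => // s [sph /=]; apply; split.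
rewrite adjoint_nonzeroE// add0e.
have -> : ~` X `&` D = set0.
  by apply/seteqP; split => // -[s m] [/= nX [sph _]]; apply: nX.
by under eq_integral do rewrite indic0 mul0r; rewrite integral0.
Qed.

Lemma P_sphereX : P X = 1%E.
Proof.
rewrite -(probability_setT P) -[in RHS](setUv X) measureU ?setICr//.
  by rewrite -[LHS]adde0; congr (_ + _)%E; exact/esym/P_in_M.1.
exact: measurableC.
Qed.

Lemma adjoint_measure_setT : adjoint_measure setT = 1%E.
Proof.
transitivity (adjoint_measure X + adjoint_measure (~` X))%E.
  by rewrite -measureU ?setUv ?setICr//; exact: measurableC.
rewrite adjoint_measure_compl adde0 adjoint_measure_sphereX ?P_sphereX//.
exact: measurable_sphere.
Qed.

HB.instance Definition _ :=
  Measure_isProbability.Build _ _ _ adjoint_measure adjoint_measure_setT.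

Lemma adjoint_measure_Dom A : measurable A -> A `<=` D ->
  adjoint_measure A = adjoint_nonzero A.
Proof.
move=> mA AD; rewrite /adjoint_measure measure_addE adjoint_zero_eq0 ?add0e//.
by apply/seteqP; split => // s [_ /AD [_ /=]]; rewrite /nonzero /= eqxx.
Qed.

Lemma ge0_integral_adjoint_measure (g : T -> \bar R) :
  measurable_fun D g -> (forall x, D x -> 0 <= g x)%E ->
  (\int[adjoint_measure]_(x in D) g x = \int[P]_(x in D) (g (sw x) * (w x)%:E))%E.
Proof.
move=> mg g0; have mgD : measurable_fun setT (g \_ D).
  exact/(measurable_restrictT _ _).1.
rewrite (eq_measure_integral adjoint_nonzero); last first.
  by move=> A mA AD; exact: adjoint_measure_Dom.
rewrite integral_mkcond (ge0_integral_pushforward (@measurable_swapmap R d))//; last first.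
  by move=> y _; exact: erestrict_ge0.
rewrite preimage_setT ge0_integral_density_measure//; first last.
- by move=> x; exact: erestrict_ge0.
- exact: measurableT_comp mgD (@measurable_swapmap R d).
rewrite [RHS]integral_mkcond; apply: eq_integral => x _ /=.
rewrite /patch indicE; have [xD|xD] := boolP (x \in D).
  by rewrite (mem_set (swapmap_Dom (set_mem xD))) mul1r.
by rewrite mul0r mule0.
Qed.

Lemma ge0_integral_adjoint_measure_swapmap (phi : T -> R) :
  measurable_fun [set: T] phi -> (forall x, 0 <= phi x) ->
  (\int[adjoint_measure]_(x in D) (phi (sw x) * w x)%:E
   = \int[P]_(x in D) (phi x)%:E)%E.
Proof.
move=> mphi phi0; rewrite ge0_integral_adjoint_measure; last 2 first.
- apply/measurable_EFinP/measurable_funTS/measurable_funM.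
    exact: measurableT_comp mphi (@measurable_swapmap R d).
  exact: measurable_weight.
- by move=> x _; rewrite lee_fin mulr_ge0 ?weight_ge0.
apply: eq_integral => x /[!inE] Dx.
by rewrite -EFinM -mulrA weight_swapmapM// mulr1 swapmapK.
Qed.

Lemma integral_adjoint_measure_sphereX S : measurable S ->
  (\int[adjoint_measure]_(x in D) ((\1_S ((sw x).1) : R) * w x)%:E
   = P ((S `*` setT) `&` D))%E.
Proof.
move=> mS; have mST : measurable (S `*` [set: Rd R d]) by exact: measurableX.
rewrite -integral_indic// -ge0_integral_adjoint_measure_swapmap//.
apply: eq_integral => x _; rewrite !indicE.
suff -> : (sw x \in S `*` setT) = ((sw x).1 \in S) by [].
by apply/idP/idP => /set_mem h; apply/mem_set; [case: h|].
Qed.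

Lemma integral_adjoint_measure_Dom A : measurable A ->
  (\int[adjoint_measure]_(x in D) ((\1_(A `&` D) (sw x) : R) * w x)%:E
   = P (A `&` D))%E.
Proof.
move=> mA; have mAD : measurable (A `&` D) by exact: measurableI.
rewrite ge0_integral_adjoint_measure_swapmap//.
by rewrite integral_indic// -setIA setIid.
Qed.

Lemma integral_adjoint_measure (f : T -> R) : measurable_fun D f ->
  let g := fun x : T => f (sw x) * w x in
  (integral_exists adjoint_measure D f <-> integral_exists P D g) /\
  (integral_exists adjoint_measure D f ->
     (\int[adjoint_measure]_(x in D) (f x)%:E = \int[P]_(x in D) (g x)%:E)%E).
Proof.
move=> mf g; have mfE : measurable_fun D (EFin \o f) by exact/measurable_EFinP.
have epos : (\int[adjoint_measure]_(x in D) (EFin \o f)^\+ x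
             = \int[P]_(x in D) (EFin \o g)^\+ x)%E.
  rewrite ge0_integral_adjoint_measure; last 2 first.
  - exact: measurable_funepos.
  - by move=> x _; exact: funepos_ge0.
  apply: eq_integral => x _.
  by rewrite !funeposE /g /= EFinM maxe_pMl ?lee_fin ?weight_ge0// mul0e.
have eneg : (\int[adjoint_measure]_(x in D) (EFin \o f)^\- x
             = \int[P]_(x in D) (EFin \o g)^\- x)%E.
  rewrite ge0_integral_adjoint_measure; last 2 first.
  - exact: measurable_funeneg.
  - by move=> x _; exact: funeneg_ge0.
  apply: eq_integral => x _.
  by rewrite !funenegE /g /= -mulNr EFinM maxe_pMl ?lee_fin ?weight_ge0// mul0e.
rewrite /integral_exists epos eneg; split=> // _.
by rewrite [LHS]integralE epos eneg -integralE.
Qed.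

Lemma adjoint_measure_in_M : in_M alpha adjoint_measure.
Proof.
split=> [|S mS Ssph]; first exact: adjoint_measure_compl.
rewrite integral_adjoint_measure_sphereX//.
rewrite -[X in (_ <= X)%E]/(adjoint_measure (S `*` setT)) adjoint_measure_sphereX//.
by apply: measureIl => //; exact: measurableX.
Qed.

(* [P] is carried by [S^{d-1} x R^d], so off [D] it only charges [S^{d-1} x {0}]. *)
Lemma P_split_Dom A : measurable A ->
  P A = (P ((sphere_slice A `*` setT) `\` D) + P (A `&` D))%E.
Proof.
move=> mA; have -> : (sphere_slice A `*` setT) `\` D = (A `&` X) `\` D.
  apply/seteqP; split => -[s m] /= [sAm nD].
    have m0 : (m : 'rV[R]_d) = 0.
      by apply/eqP; apply: contra_notT nD => m0; case: sAm => -[sph _] _.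
    by rewrite m0 in sAm nD *; case: sAm => -[sph As0] _.
  have m0 : (m : 'rV[R]_d) = 0.
    by apply/eqP; apply: contra_notT nD => m0; case: sAm => _ [sph _].
  by rewrite m0 in sAm nD *; case: sAm => As0 [sph _].
have -> : A `&` D = (A `&` X) `&` D.
  by rewrite -setIA; congr (_ `&` _); apply/seteqP; split => [x [] |x []].
rewrite -measureDI; [|exact: measurableI|exact: mD].
rewrite (measureDI P mA mX) -[RHS]add0e; congr (_ + _)%E.
apply/eqP; rewrite eq_le measure_ge0 andbT -P_in_M.1.
apply: le_measure; rewrite ?inE; last by move=> x [].
  exact: measurableD mA mX.
exact: measurableC mX.
Qed.

Lemma adjoint_adjoint_measure A : measurable A ->
  adjoint alpha adjoint_measure A = P A.
Proof.
move=> mA; have mSA := measurable_sphere_slice mA.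
have mSAT : measurable (sphere_slice A `*` [set: Rd R d]) by exact: measurableX.
rewrite adjointE -[X in (X - _ + _)%E]/(adjoint_measure (sphere_slice A `*` setT)).
rewrite adjoint_measure_sphereX//; last by move=> s [].
rewrite integral_adjoint_measure_sphereX// integral_adjoint_measure_Dom//.
rewrite -measureD//; first exact/esym/P_split_Dom.
by apply: (@le_lt_trans _ _ 1%E); [exact: probability_le1|exact: ltry].
Qed.

End adjoint_measure.
Arguments adjoint_measure {R d alpha P}.

Theorem lemma4p3 (R : realType) (d : nat) (alpha : R)
    (P : probability (Rd2 R d) R) :
  0 < alpha -> in_M alpha P ->
  exists Q : probability (Rd2 R d) R,
    (forall A : set (Rd2 R d), measurable A -> Q A = adjoint alpha P A) /\
    Q (~` (sphere R d `*` setT)) = 0%E /\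
    (forall S : set (Rd R d), measurable S -> S `<=` sphere R d ->
       Q (S `*` setT) = P (S `*` setT)) /\
    (forall f : Rd2 R d -> R, measurable_fun (Dom R d) f ->
       let g := fun x : Rd2 R d => f (swapmap x) * weight alpha x in
       ((integral_exists Q (Dom R d) f <-> integral_exists P (Dom R d) g) /\
       (integral_exists Q (Dom R d) f ->
          (\int[Q]_(x in Dom R d) (f x)%:E
           = \int[P]_(x in Dom R d) (g x)%:E)%E))) /\
    in_M alpha Q /\
    (forall A : set (Rd2 R d), measurable A -> adjoint alpha Q A = P A).
Proof.
move=> _ P_in_M.
exists (adjoint_measure P_in_M : probability _ _).
split; first exact: adjoint_measureE.
split; first exact: adjoint_measure_compl.
split; first exact: adjoint_measure_sphereX.
split; first exact: integral_adjoint_measure.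
split; first exact: adjoint_measure_in_M.
exact: adjoint_adjoint_measure.
Qed.
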